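(* Let $n \in \mathbb{Z}_{>0}$ and $m \in \mathbb{Z}_{\geq 0}$, and let $f$ be the bijection described in the context. Then \[ f\left(\bigsqcup_{\mu \leq (2m)^n} \mathrm{SSYT}(\mu,n)\right) = \left\{ ((T,\lambda),t) \in \bigsqcup_{\lambda \leq (2m)^n \colon \text{even} } \mathrm{SSYT}(\lambda,n) \times \{0,1\}^n \;\middle|\; t^{-1}(1) \subseteq S(T) \right\}, \] where the right-hand side is in bijection with $\displaystyle \bigsqcup_{(T,\lambda) \in \bigsqcup_{\lambda \leq (2m)^n \colon \text{even} } \mathrm{SSYT}(\lambda,n)} \{0,1\}^{S(T)}$.
   Context: Let $n \in \mathbb{Z}_{>0}$ and $m \in \mathbb{Z}_{\geq 0}$. For a partition $\lambda$ with at most $n$ parts, $\mathrm{SSYT}(\lambda,n)$ denotes the set of semi-standard Young tableaux of shape $\lambda$ with entries in $\{1,2,\ldots,n\}$, using the convention that entries are weakly decreasing along rows and strictly decreasing down columns. For partitions $\lambda,\mu$ with $n$ parts, $\lambda \leq \mu$ means $\lambda_i \leq \mu_i$ for all $i$; $(k)^n=(k,k,\ldots,k)$; a partition is even if all its parts are even. Row insertion $T \leftarrow x$ (for a tableau $T$ and positive integer $x$): starting from the first row, insert $x$ into the row by replacing (bumping) the leftmost entry $y$ strictly less than $x$, then insert $y$ into the next row in the same manner; if no such entry exists in a row, place $x$ at the end of that row and stop. Fact used: if $U$ is a tableau of shape $\mu$ and $\lambda \leq \mu$ with $\mu\setminus\lambda$ having at most one box in each row, $p=\#(\mu\setminus\lambda)$,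 then there exist a unique tableau $T$ of shape $\lambda$ and integers $x_1<x_2<\cdots<x_p$ with $U = (((T \leftarrow x_1) \leftarrow x_2) \leftarrow \cdots) \leftarrow x_p$ (obtained by repeatedly applying reverse row insertion to the boxes of $\mu\setminus\lambda$ from bottom to top). The bijection $f \colon \bigsqcup_{\mu \leq (2m+1)^n} \mathrm{SSYT}(\mu,n) \to \bigsqcup_{\lambda \leq (2m)^n \colon \text{even}} \mathrm{SSYT}(\lambda,n) \times \{0,1\}^n$ is defined as follows: for $(U,\mu)$, let $\lambda$ be the even partition with $\lambda_i \in \{\mu_i,\mu_i-1\}$; take the unique $T \in \mathrm{SSYT}(\lambda,n)$ and $x_1<\cdots<x_p \leq n$ with $U = (((T \leftarrow x_1) \leftarrow x_2) \leftarrow \cdots) \leftarrow x_p$; define $t(i)=1$ if $i \in \{x_1,\ldots,x_p\}$ and $t(i)=0$ otherwise; set $f((U,\mu)) = ((T,\lambda),t)$. Its inverse sends $((T,\lambda),t)$ to $(U,\mathrm{shape}(U))$ with $U = (((T \leftarrow x_1) \leftarrow \cdots) \leftarrow x_p)$, $\{x_1<\cdots<x_p\}=t^{-1}(1)$. For $T \in \mathrm{SSYT}(\lambda,n)$ with $\lambda \leq (2m)^n$ even, $S(T) := \{T_{1,2m}+1, T_{1,2m}+2, \ldots, n\}$, where $T_{1,2m}:=0$ if $\lambda_1 < 2m$. (Equivalently, $S(T)=\{1\le j\le n \mid \pi'_{1,j}\ne 2m\}$ where $\pi'$ is the even symmetric plane partition (shifted staircase plane partition of size $n$ with entries $\le 2m$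 and even diagonal entries) whose row-wise conjugate is $T$.) *)

From mathcomp Require Import all_boot.
Set Implicit Arguments. Unset Strict Implicit. Unset Printing Implicit Defensive.

(* A partition with (exactly) n parts: a weakly decreasing nat sequence of
   length n (zero parts allowed). *)
Definition is_part (n : nat) (la : seq nat) : bool :=
  (size la == n) && sorted geq la.

Definition part_le (la mu : seq nat) : bool :=
  (size la == size mu) && all2 leq la mu.

Definition const_part (n k : nat) : seq nat := nseq n k.

Definition even_part (la : seq nat) : bool := all (fun k => ~~ odd k) la.

Definition evenize (mu : seq nat) : seq nat := [seq k - odd k | k <- mu].

(* A tableau is a list of rows (row i = i-th row from the top); we store
   exactly n rows (possibly empty) for a shape with n parts. *)
Definition tableau := seq (seq nat).

(* SSYT(la, n) with the convention: rows weakly decreasing, columns strictly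
   decreasing, entries in {1,...,n}. *)
Definition is_SSYT (n : nat) (la : seq nat) (T : tableau) : bool :=
  [&& is_part n la, size T == n, map size T == la,
      all (fun r => all (fun x => (0 < x) && (x <= n)) r) T,
      all (fun r => sorted geq r) T &
      all (fun i => all (fun j => nth 0 (nth [::] T i.+1) j < nth 0 (nth [::] T i) j)
                        (iota 0 (size (nth [::] T i.+1))))
          (iota 0 n.-1)].

Definition row_ins (r : seq nat) (x : nat) : option nat * seq nat :=
  let i := find (fun y => y < x) r in
  if i < size r then (Some (nth 0 r i), set_nth 0 r i x) else (None, rcons r x).

Fixpoint rins (T : tableau) (x : nat) : tableau :=
  match T with
  | [::] => [:: [:: x]]
  | r :: T' =>
      match row_ins r x with
      | (None, r') => r' :: T'
      | (Some y, r') => r' :: rins T' y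
      end
  end.

Definition rins_seq (T : tableau) (xs : seq nat) : tableau := foldl rins T xs.

(* t^{-1}(1) as the increasing list x_1 < ... < x_p of values in {1..n}
   (the ordinal i : 'I_n stands for the value i+1). *)
Definition ones (n : nat) (t : {ffun 'I_n -> bool}) : seq nat :=
  [seq (nat_of_ord i).+1 | i <- enum 'I_n & t i].

(* The bijection f, described by its graph:
   f((U,mu)) = ((T,la),t)  iff  la is the even partition with
   la_i in {mu_i, mu_i - 1}, T in SSYT(la,n), and
   U = (((T <- x_1) <- ...) <- x_p) with {x_1 < ... < x_p} = t^{-1}(1).
   (By the uniqueness fact in the paper, this determines ((T,la),t).) *)
Definition f_graph (n : nat) (U : tableau) (mu : seq nat)
    (T : tableau) (la : seq nat) (t : {ffun 'I_n -> bool}) : Prop :=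
  [/\ la = evenize mu, is_SSYT n la T & U = rins_seq T (ones t)].

(* T_{1,2m}, with T_{1,2m} := 0 if la_1 < 2m; for m = 0 we use the
   convention T_{1,0} := n. *)
Definition T12m (n m : nat) (T : tableau) : nat :=
  let r := nth [::] T 0 in
  if m == 0 then n
  else if size r < m.*2 then 0 else nth 0 r (m.*2).-1.

Definition S_of (n m : nat) (T : tableau) : pred nat :=
  fun j => (T12m n m T < j) && (j <= n).

From mathcomp Require Import all_boot zify.
Set Implicit Arguments. Unset Strict Implicit. Unset Printing Implicit Defensive.

(* Row-inserting an increasing sequence x_1 < ... < x_p into a row bumps an
   increasing sequence, and once x_1 sits in the row every later x_i bumps an
   entry. Hence each row of U = (((T <- x_1) <- ...) <- x_p) has at most one box
   more than the corresponding row of T, so the shape of U evenizes back to the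
   even shape of T; and the first row grows exactly when x_1 is appended, i.e.
   when x_1 is at most the last entry of that row. As shapes are partitions, U
   fits in (2m)^n iff its first row does, which for a full first row of T
   means T_{1,2m} < x_1, i.e. t^{-1}(1) is contained in S(T). *)

Lemma geq_trans : transitive geq.
Proof. by move=> y x z le_yx le_zy; apply: leq_trans le_zy le_yx. Qed.

Lemma size_set_nth_lt (A : Type) (x0 : A) s i y : i < size s ->
  size (set_nth x0 s i y) = size s.
Proof. by move=> lt_i_s; rewrite size_set_nth; apply/maxn_idPr. Qed.

Lemma mem_set_nth_lt (A : eqType) (x0 : A) s i y : i < size s -> y \in set_nth x0 s i y.
Proof.
by move=> lt_i_s; apply/(nthP x0); exists i; rewrite ?size_set_nth_lt ?nth_set_nth /= ?eqxx.
Qed.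

Lemma sorted_geq_nth (r : seq nat) i j : sorted geq r -> i <= j -> j < size r ->
  nth 0 r j <= nth 0 r i.
Proof.
move=> r_sorted le_ij lt_j_r.
apply: (sorted_leq_nth geq_trans leqnn 0 r_sorted) => //.
by rewrite inE (leq_ltn_trans le_ij).
Qed.

Lemma all_leq_last (r : seq nat) x : sorted geq r -> r != [::] ->
  all (leq x) r = (x <= last 0 r).
Proof.
move=> r_sorted r_nil; have lt_last_r : (size r).-1 < size r by rewrite prednK // lt0n size_eq0.
apply/allP/idP => [-> //|le_x_last y /(nthP 0) [i lt_i_r <-]].
  by rewrite -nth_last mem_nth.
by apply: leq_trans le_x_last _; rewrite -nth_last sorted_geq_nth // -ltnS prednK // lt0n size_eq0.
Qed.

Variant row_ins_spec (r : seq nat) (x : nat) : option nat * seq nat -> Type :=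
  | RowInsBump j of j < size r & nth 0 r j < x & (forall i, i < j -> x <= nth 0 r i) :
      row_ins_spec r x (Some (nth 0 r j), set_nth 0 r j x)
  | RowInsAppend of all (leq x) r : row_ins_spec r x (None, rcons r x).

Lemma row_insP r x : row_ins_spec r x (row_ins r x).
Proof.
rewrite /row_ins; case: ifPn => [lt_j_r | ge_j_r].
  apply: RowInsBump => // [|i /(before_find 0)/negbT]; last by rewrite -leqNgt.
  by apply: (nth_find 0 (a := fun y => y < x)); rewrite has_find.
apply: RowInsAppend; apply/allP => y y_r; rewrite leqNgt; apply: contra ge_j_r => lt_y_x.
by rewrite -has_find; apply/hasP; exists y.
Qed.

Lemma row_ins_bumped r x y : (row_ins r x).1 = Some y -> y \in r /\ y < x.
Proof. by case: row_insP => // j lt_j_r lt_rj_x _ [<-]; rewrite mem_nth. Qed.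

Lemma sorted_row_ins r x : sorted geq r -> sorted geq (row_ins r x).2.
Proof.
move=> r_sorted; case: row_insP => [j lt_j_r lt_rj_x le_x_before | /allP le_x_r] /=.
  apply/(sortedP 0) => i; rewrite size_set_nth_lt // => lt_i1_r.
  have /(sortedP 0)/(_ i lt_i1_r) := r_sorted; rewrite /geq /= !nth_set_nth /=.
  case: eqP => [ji|_]; case: eqP => [ij|_] // le_next.
    by apply: le_x_before; rewrite -ji.
  by rewrite ij in le_next *; apply: leq_trans le_next (ltnW lt_rj_x).
case: r r_sorted le_x_r => [|a r] //= r_sorted le_x_r.
by rewrite rcons_path r_sorted; apply: le_x_r; apply: mem_last.
Qed.

Lemma all_row_ins (P : pred nat) r x : all P r -> P x -> all P (row_ins r x).2.
Proof.
move=> /allP Pr Px; case: row_insP => [j lt_j_r _ _ | _] /=; last first.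
  by rewrite all_rcons Px; apply/allP.
apply/(all_nthP 0) => i; rewrite size_set_nth_lt // => lt_i_r; rewrite nth_set_nth /=.
by case: eqP => // _; apply/Pr/mem_nth.
Qed.

Definition col_strict (r s : seq nat) : bool :=
  (size s <= size r) && all (fun j => nth 0 s j < nth 0 r j) (iota 0 (size s)).

Lemma col_strictP r s :
  reflect (size s <= size r /\ forall j, j < size s -> nth 0 s j < nth 0 r j)
          (col_strict r s).
Proof.
apply: (iffP andP) => [[le_sr /allP lt_sr]|[le_sr lt_sr]]; split => //.
  by move=> j lt_j_s; apply: lt_sr; rewrite mem_iota.
by apply/allP => j; rewrite mem_iota => /andP[_ lt_j_s]; apply: lt_sr.
Qed.

Lemma col_strict_row_ins r s x : col_strict r s ->
  col_strict (row_ins r x).2 (if (row_ins r x).1 is Some y then (row_ins s y).2 else s).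
Proof.
move=> /col_strictP [le_sr lt_sr].
case: row_insP => [j lt_j_r lt_rj_x le_x_before | _] /=; apply/col_strictP; last first.
  split=> [|i lt_i_s]; first by rewrite size_rcons ltnW.
  by rewrite nth_rcons (leq_trans lt_i_s le_sr); apply: lt_sr.
set y := nth 0 r j; set r' := set_nth 0 r j x.
have s_below_r' i : i < size s -> nth 0 s i < nth 0 r' i.
  rewrite nth_set_nth /=; case: eqP => [->|_] lt_i_s; last exact: lt_sr.
  exact: ltn_trans (lt_sr _ lt_i_s) lt_rj_x.
have y_below_r' i : i <= j -> y < nth 0 r' i.
  rewrite nth_set_nth /= leq_eqVlt; case: eqP => [_ _ //|_ /= lt_ij].
  exact: leq_trans lt_rj_x (le_x_before _ lt_ij).
have s_j_lt_y : j < size s -> nth 0 s j < y by apply: lt_sr.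
rewrite size_set_nth_lt //; case: row_insP => [k lt_k_s _ le_y_before | /allP le_y_s].
  have le_kj : k <= j.
    rewrite leqNgt; apply/negP => lt_jk.
    by have := le_y_before _ lt_jk; rewrite leqNgt s_j_lt_y // (ltn_trans lt_jk).
  split=> [|i]; first by rewrite size_set_nth_lt // (leq_trans _ le_sr).
  rewrite size_set_nth_lt // nth_set_nth /=.
  by case: eqP => [->|_] lt_i_s; [apply: y_below_r' | apply: s_below_r'].
have le_s_j : size s <= j.
  rewrite leqNgt; apply/negP => lt_j_s.
  by have := le_y_s _ (mem_nth 0 lt_j_s); rewrite leqNgt s_j_lt_y.
split=> [|i]; first by rewrite size_rcons (leq_ltn_trans le_s_j).
rewrite size_rcons ltnS leq_eqVlt nth_rcons => /orP[/eqP ->|lt_i_s].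
  by rewrite ltnn eqxx; apply: y_below_r'.
by rewrite lt_i_s; apply: s_below_r'.
Qed.

Lemma sorted_col_strict_cons r T :
  sorted col_strict (r :: T) = col_strict r (head [::] T) && sorted col_strict T.
Proof. by case: T => [|s T] //=; rewrite andbT. Qed.

Lemma head_rins T x : head [::] (rins T x) = (row_ins (head [::] T) x).2.
Proof. by case: T => [|r T] //=; case: (row_ins r x) => [[y|] r']. Qed.

Lemma sorted_col_strict_rins T x : sorted col_strict T -> sorted col_strict (rins T x).
Proof.
elim: T x => [|r T IH] x //; rewrite sorted_col_strict_cons => /andP [cs_r T_cs] /=.
have := col_strict_row_ins x cs_r.
case: (row_ins r x) => [[y|] r'] cs_r'; rewrite sorted_col_strict_cons ?head_rins cs_r' //.
exact: IH.
Qed.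

Lemma sorted_rins T x : all (sorted geq) T -> all (sorted geq) (rins T x).
Proof.
elim: T x => [|r T IH] x //= /andP [r_sorted T_sorted].
have := sorted_row_ins x r_sorted.
by case: (row_ins r x) => [[y|] r'] /= -> //=; apply: IH.
Qed.

Lemma all_rins (P : pred nat) T x : all (all P) T -> P x -> all (all P) (rins T x).
Proof.
elim: T x => [|r T IH] x /=; first by move=> _ ->.
move=> /andP [Pr PT] Px; have := all_row_ins Pr Px; have := @row_ins_bumped r x.
case: (row_ins r x) => [[y|] r'] /= bumped -> //=.
by apply: IH => //; apply/(allP Pr); have [] := bumped y erefl.
Qed.

(* Bumped entries strictly decrease and stay positive, so a new row can only
   appear at depth less than x. *)
Lemma size_rins T x : all (all (leq 1)) T -> 0 < x ->
  size T <= size (rins T x) <= maxn (size T) x.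
Proof.
elim: T x => [|r T IH] x /=; first by rewrite max0n.
move=> /andP [pos_r pos_T] pos_x; have := @row_ins_bumped r x.
case: (row_ins r x) => [[y|] r'] /= bumped; last by rewrite leqnn leq_maxl.
have [y_r lt_y_x] := bumped y erefl.
have := IH y pos_T (allP pos_r _ y_r); lia.
Qed.

Definition is_tableau (n : nat) (T : tableau) : bool :=
  [&& size T == n, sorted col_strict T, all (sorted geq) T &
      all (all (fun z => 0 < z <= n)) T].

Lemma is_tableau_rins n T x : 0 < x <= n -> is_tableau n T -> is_tableau n (rins T x).
Proof.
move=> /andP [pos_x le_x_n] /and4P [/eqP size_T T_cs T_rows T_entries].
have T_pos : all (all (leq 1)) T.
  by apply: sub_all T_entries => r; apply: sub_all => z /andP[].
apply/and4P; split; [|exact: sorted_col_strict_rins|exact: sorted_rins|].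
  by have := size_rins T_pos pos_x; rewrite size_T; lia.
by apply: all_rins; rewrite ?pos_x.
Qed.

Lemma is_tableau_rins_seq n T xs : all (fun x => 0 < x <= n) xs ->
  is_tableau n T -> is_tableau n (rins_seq T xs).
Proof.
elim: xs T => [|x xs IH] T //= /andP [x_range xs_range] T_tab.
by apply: IH => //; apply: is_tableau_rins.
Qed.

Lemma is_part_shape n T : is_tableau n T -> is_part n (map size T).
Proof.
case/and4P => /eqP size_T T_cs _ _; rewrite /is_part size_map size_T eqxx sorted_map /=.
by apply: sub_sorted T_cs => r s /col_strictP [].
Qed.

Lemma is_SSYTP n la T : is_SSYT n la T <-> la = map size T /\ is_tableau n T.
Proof.
split=> [|[-> T_tab]].
  case/and5P => /andP [_ la_sorted] /eqP size_T /eqP shape_T entries /andP [rows cols].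
  split=> //; apply/and4P; split => //; first by rewrite size_T.
  apply/(sortedP [::]) => i lt_i1_T; apply/col_strictP; split.
    by move: la_sorted; rewrite -shape_T sorted_map => /(sortedP [::])/(_ i lt_i1_T).
  move=> j lt_j; move/allP: cols => /(_ i); rewrite mem_iota add0n.
  by move=> /(_ _)/allP/(_ j); rewrite mem_iota add0n lt_j; apply; lia.
have /and4P [/eqP size_T T_cs rows entries] := T_tab.
apply/and5P; split => //; [exact: is_part_shape | by rewrite size_T | ].
rewrite rows; apply/allP => i; rewrite mem_iota add0n => lt_i.
have lt_i1_T : i.+1 < size T by rewrite size_T; lia.
have /col_strictP [_ lt_col] := (sortedP [::] T_cs) i lt_i1_T.
by apply/allP => j; rewrite mem_iota add0n => lt_j; apply: lt_col.
Qed.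

Fixpoint row_ins_seq (r xs : seq nat) : seq nat * seq nat :=
  if xs is x :: xs' then
    let p := row_ins r x in
    let q := row_ins_seq p.2 xs' in
    (if p.1 is Some y then y :: q.1 else q.1, q.2)
  else ([::], r).

Lemma rins_seq_cons r T xs :
  rins_seq (r :: T) xs = (row_ins_seq r xs).2 :: rins_seq T (row_ins_seq r xs).1.
Proof.
elim: xs r T => [|x xs IH] r T //=.
by rewrite /rins_seq /=; case: (row_ins r x) => [[y|] r'] /=; apply: IH.
Qed.

Lemma row_ins_seq_path r b xs : sorted geq r -> b \in r -> path ltn b xs ->
  [/\ all (leq b) (row_ins_seq r xs).1, sorted ltn (row_ins_seq r xs).1
    & size (row_ins_seq r xs).2 = size r].
Proof.
elim: xs r b => [|x xs IH] r b //= r_sorted b_r /andP [lt_bx xs_path].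
have := sorted_row_ins x r_sorted.
case: row_insP => [j lt_j_r lt_rj_x le_x_before /= r'_sorted | /allP le_x_r]; last first.
  by have := le_x_r _ b_r; rewrite leqNgt lt_bx.
have [ge_x ys_sorted size_eq] := IH _ _ r'_sorted (mem_set_nth_lt 0 x lt_j_r) xs_path.
have le_b_rj : b <= nth 0 r j.
  have le_j_b : j <= index b r.
    by rewrite leqNgt; apply/negP => /le_x_before; rewrite nth_index // leqNgt lt_bx.
  by rewrite -{1}(nth_index 0 b_r); apply: sorted_geq_nth; rewrite // index_mem.
split; last by rewrite size_eq size_set_nth_lt.
  by rewrite /= le_b_rj; apply: sub_all ge_x => z; apply: leq_trans (ltnW lt_bx).
rewrite /= (path_sortedE ltn_trans) ys_sorted andbT.
by apply: sub_all ge_x => z; apply: leq_trans lt_rj_x.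
Qed.

Lemma row_ins_seq_sorted_size r xs : sorted geq r -> sorted ltn xs ->
  sorted ltn (row_ins_seq r xs).1 /\
  size (row_ins_seq r xs).2 = size r + has (fun x => all (leq x) r) xs.
Proof.
case: xs => [|x xs] r_sorted //= xs_path; first by rewrite addn0.
have le_x_xs : all (leq x) (x :: xs).
  by rewrite /= leqnn; apply: sub_all (order_path_min ltn_trans xs_path) => z /ltnW.
have := sorted_row_ins x r_sorted.
case: row_insP => [j lt_j_r lt_rj_x _ | le_x_r] /= r'_sorted; last first.
  have x_r' : x \in rcons r x by rewrite mem_rcons mem_head.
  have [_ ys_sorted ->] := row_ins_seq_path r'_sorted x_r' xs_path.
  by rewrite size_rcons le_x_r addn1.
have [ge_x ys_sorted ->] := row_ins_seq_path r'_sorted (mem_set_nth_lt 0 x lt_j_r) xs_path.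
split.
  rewrite /= (path_sortedE ltn_trans) ys_sorted andbT.
  by apply: sub_all ge_x => z; apply: leq_trans lt_rj_x.
have no_fit : ~~ has (fun x => all (leq x) r) (x :: xs).
  apply/hasPn => z /(allP le_x_xs) le_xz; apply/negP => /allP /(_ _ (mem_nth 0 lt_j_r)).
  by rewrite leqNgt (leq_trans lt_rj_x le_xz).
by move: no_fit => /= /negbTE ->; rewrite size_set_nth_lt ?addn0.
Qed.

Lemma evenize_shape_rins_seq T xs : all (sorted geq) T -> sorted ltn xs ->
  even_part (map size T) -> size (rins_seq T xs) = size T ->
  evenize (map size (rins_seq T xs)) = map size T.
Proof.
elim: T xs => [|r T IH] xs; first by move=> _ _ _ /size0nil ->.
rewrite rins_seq_cons /= => /andP [r_sorted T_sorted] xs_sorted /andP [even_r even_T] [size_eq].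
have [ys_sorted ->] := row_ins_seq_sorted_size r_sorted xs_sorted.
rewrite IH // oddD (negbTE even_r).
by case: has; rewrite /= ?addn1 ?subn1 ?addn0 ?subn0.
Qed.

Lemma size_row_ins_seq_bound n m r T xs :
  sorted geq r -> ~~ odd (size r) -> size r <= m.*2 ->
  sorted ltn xs -> all (fun x => 0 < x <= n) xs ->
  (size (row_ins_seq r xs).2 <= m.*2) = all (S_of n m (r :: T)) xs.
Proof.
move=> r_sorted even_r le_r_2m xs_sorted xs_range.
have [_ ->] := row_ins_seq_sorted_size r_sorted xs_sorted.
rewrite /S_of /T12m /=; case: m le_r_2m => [|m] /= le_r_2m.
  move: le_r_2m r_sorted; rewrite leqn0 size_eq0 => /eqP -> _.
  by case: xs {xs_sorted xs_range} => [|x xs] //=; rewrite ltnNge andNb.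
case: ltnP => [lt_r_2m | ge_r_2m].
  by rewrite xs_range; apply/idP; move: (has _ xs) => b; lia.
have size_r : size r = m.+1.*2 by apply/eqP; rewrite eqn_leq le_r_2m.
have r_nil : r != [::] by rewrite -size_eq0 size_r.
have -> : m.*2.+1 = (size r).-1 by rewrite size_r.
rewrite -size_r nth_last -{2}[size r]addn0 leq_add2l leqn0 eqb0 -all_predC.
apply: eq_in_all => x /(allP xs_range) /andP [_ le_x_n] /=.
by rewrite le_x_n andbT all_leq_last // -ltnNge.
Qed.

Lemma part_le_const n k s : is_part n s -> part_le s (const_part n k) = (head 0 s <= k).
Proof.
case/andP => /eqP <- s_sorted; rewrite /part_le /const_part size_nseq eqxx /=.
have -> : all2 leq s (nseq (size s) k) = all (fun x => x <= k) s.
  by elim: s {s_sorted} => //= x s ->.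
case: s s_sorted => [|a s] //= /(order_path_min geq_trans) le_s_a.
apply/andP/idP => [[] //|le_a_k]; split=> //.
by apply: sub_all le_s_a => x le_xa; apply: leq_trans le_xa le_a_k.
Qed.

Lemma sorted_ones n (t : {ffun 'I_n -> bool}) : sorted ltn (ones t).
Proof.
have -> : ones t = map succn [seq val i | i <- enum 'I_n & t i] by rewrite -map_comp.
rewrite sorted_map; apply: (subseq_sorted ltn_trans _ (iota_ltn_sorted 0 n)).
by rewrite -val_enum_ord; apply/map_subseq/filter_subseq.
Qed.

Lemma ones_range n (t : {ffun 'I_n -> bool}) : all (fun x => 0 < x <= n) (ones t).
Proof. by apply/allP => x /mapP [i _ ->]; rewrite ltn0Sn ltn_ord. Qed.

Theorem proposition3p16 (n m : nat) (hn : 0 < n)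
    (la : seq nat) (T : tableau) (t : {ffun 'I_n -> bool}) :
  even_part la -> part_le la (const_part n m.*2) -> is_SSYT n la T ->
  ((exists (mu : seq nat) (U : tableau),
      [/\ part_le mu (const_part n m.*2), is_SSYT n mu U & f_graph U mu T la t])
   <-> {subset ones t <= S_of n m T}).
Proof.
move=> la_even la_le T_SSYT; have /is_SSYTP [la_shape T_tab] := T_SSYT; subst la.
case: T T_tab la_even la_le T_SSYT => [/and4P [/eqP n0 _ _ _] | r T']; first by rewrite -n0 in hn.
move=> T_tab la_even la_le T_SSYT; have /andP [r_even _] := la_even.
have /and4P [/eqP size_T _ rows_sorted _] := T_tab; have /andP [r_sorted _] := rows_sorted.
rewrite part_le_const ?is_part_shape //= in la_le.
set U := rins_seq (r :: T') (ones t).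
have U_tab : is_tableau n U := is_tableau_rins_seq (ones_range t) T_tab.
have U_fits : part_le (map size U) (const_part n m.*2) = all (S_of n m (r :: T')) (ones t).
  rewrite part_le_const ?is_part_shape // /U rins_seq_cons.
  exact: size_row_ins_seq_bound r_sorted r_even la_le (sorted_ones t) (ones_range t).
split=> [[mu [U' [mu_le /is_SSYTP [mu_shape _] [_ _ U'_def]]]]|/allP fits].
  by apply/allP; rewrite -U_fits /U -U'_def -mu_shape.
exists (map size U), U; split; [by rewrite U_fits | exact/is_SSYTP | split => //].
rewrite evenize_shape_rins_seq ?sorted_ones // -/U.
by case/and4P: U_tab => /eqP -> _ _ _; rewrite -size_T.
Qed.
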